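(* For a join doctrine $\Phi$, the following are equivalent: (i) $\omega\notin\Phi$; (ii) $\mathbb{I}=[0,1]$ (usual order) is $\Phi$-algebraic; (iii) every $\Phi$-continuous lattice is $\Phi$-algebraic.
   Context: A join doctrine is a class $\Phi$ of posets such that: (1) the one-element poset is in $\Phi$; (2) if a poset $P$ is the union of a set $\mathcal{S}$ of subposets each in $\Phi$ and $\mathcal{S}$ (ordered by inclusion) is in $\Phi$, then $P\in\Phi$; (3) if $f:P\to Q$ is monotone with cofinal image and $P\in\Phi$ then $Q\in\Phi$; (4) cofinal subposets of members of $\Phi$ are in $\Phi$. $\omega$ = natural numbers with usual order. For a poset $X$, $\Phi(X)$ is the set of lower subsets belonging (as subposets) to $\Phi$. A $\Phi$-join is a join of a subset in $\Phi$. In a complete lattice $X$: $\Downarrow x:=\bigcap\{\phi\in\Phi(X)\mid x\le\bigvee\phi\}$; $y\ll x$ iff $y\in\Downarrow x$; $x$ is $\Phi$-compact if $x\ll x$; $X$ is $\Phi$-algebraic if the smallest subset containing the $\Phi$-compact elements and closed under $\Phi$-joins is $X$; $X$ is a $\Phi$-continuous lattice if each $x$ has $\phi\in\Phi(X)$ with $\phi\subseteq\Downarrow x$ and $x\le\bigvee\phi$. *)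

From Stdlib Require Import Reals ProofIrrelevance FunctionalExtensionality PropExtensionality.
Open Scope R_scope.

Record poset := Poset {
  car :> Type;
  le : car -> car -> Prop;
  le_refl : forall x, le x x;
  le_trans : forall x y z, le x y -> le y z -> le x z;
  le_antisym : forall x y, le x y -> le y x -> x = y
}.
Arguments le {p} _ _.

Definition sub_poset (P : poset) (A : P -> Prop) : poset.
Proof.
refine (@Poset {x : P | A x} (fun a b => le (proj1_sig a) (proj1_sig b)) _ _ _).
- intros [x Hx]; apply le_refl.
- intros [x Hx] [y Hy] [z Hz]; simpl; apply le_trans.
- intros [x Hx] [y Hy]; simpl; intros H1 H2.
  pose proof (le_antisym _ _ _ H1 H2) as E; subst y.
  f_equal; apply proof_irrelevance.
Defined.

Definition incl_poset (P : poset) (S : (P -> Prop) -> Prop) : poset.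
Proof.
refine (@Poset {A : P -> Prop | S A}
          (fun a b => forall x, proj1_sig a x -> proj1_sig b x) _ _ _).
- intros [A HA] x; simpl; auto.
- intros [A HA] [B HB] [C HC]; simpl; auto.
- intros [A HA] [B HB]; simpl; intros H1 H2.
  assert (E : A = B).
  { apply functional_extensionality; intro x;
    apply propositional_extensionality; split; auto. }
  subst B; f_equal; apply proof_irrelevance.
Defined.

Definition one_poset : poset.
Proof.
refine (@Poset unit (fun _ _ => True) _ _ _); auto.
intros [] [] _ _; reflexivity.
Defined.

Definition omega_poset : poset.
Proof.
refine (@Poset nat Peano.le _ _ _).
- intro; apply le_n.
- intros x y z; apply PeanoNat.Nat.le_trans.
- intros x y; apply PeanoNat.Nat.le_antisymm.
Defined.

Definition unit_interval : poset.
Proof.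
refine (@Poset {r : R | 0 <= r <= 1} (fun a b => proj1_sig a <= proj1_sig b) _ _ _).
- intros [x Hx]; simpl; apply Rle_refl.
- intros [x Hx] [y Hy] [z Hz]; simpl; apply Rle_trans.
- intros [x Hx] [y Hy]; simpl; intros H1 H2.
  pose proof (Rle_antisym _ _ H1 H2) as E; subst y.
  f_equal; apply proof_irrelevance.
Defined.

Definition monotone {P Q : poset} (f : P -> Q) : Prop :=
  forall x y, le x y -> le (f x) (f y).

Definition cofinal {P : poset} (A : P -> Prop) : Prop :=
  forall x, exists y, A y /\ le x y.

Definition cofinal_image {P Q : poset} (f : P -> Q) : Prop :=
  forall q, exists p, le q (f p).

Definition join_doctrine (Phi : poset -> Prop) : Prop :=
  Phi one_poset /\
  (forall (P : poset) (S : (P -> Prop) -> Prop),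
               (forall x : P, exists A, S A /\ A x) ->
               (forall A, S A -> Phi (sub_poset P A)) ->
               Phi (incl_poset P S) -> Phi P) /\
  (forall (P Q : poset) (f : P -> Q),
               monotone f -> cofinal_image f -> Phi P -> Phi Q) /\
  (forall (P : poset) (A : P -> Prop),
               cofinal A -> Phi P -> Phi (sub_poset P A)).

Definition lower {X : poset} (A : X -> Prop) : Prop :=
  forall x y, le y x -> A x -> A y.

Definition PhiX (Phi : poset -> Prop) (X : poset) (A : X -> Prop) : Prop :=
  lower A /\ Phi (sub_poset X A).

Definition is_join {X : poset} (A : X -> Prop) (s : X) : Prop :=
  (forall a, A a -> le a s) /\ (forall u, (forall a, A a -> le a u) -> le s u).

Definition complete_lattice (X : poset) : Prop :=
  forall A : X -> Prop, exists s, is_join A s.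

Definition way_below (Phi : poset -> Prop) {X : poset} (y x : X) : Prop :=
  forall phi : X -> Prop, PhiX Phi X phi ->
    (forall s, is_join phi s -> le x s) -> phi y.

Definition Phi_compact (Phi : poset -> Prop) {X : poset} (x : X) : Prop :=
  way_below Phi x x.

Definition closed_Phi_joins (Phi : poset -> Prop) {X : poset} (C : X -> Prop) : Prop :=
  forall A : X -> Prop, (forall a, A a -> C a) -> Phi (sub_poset X A) ->
    forall s, is_join A s -> C s.

Definition Phi_algebraic (Phi : poset -> Prop) (X : poset) : Prop :=
  forall x : X, forall C : X -> Prop,
    (forall c, Phi_compact Phi c -> C c) -> closed_Phi_joins Phi C -> C x.

Definition Phi_continuous_lattice (Phi : poset -> Prop) (X : poset) : Prop :=
  complete_lattice X /\
  forall x : X, exists phi : X -> Prop, PhiX Phi X phi /\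
    (forall y, phi y -> way_below Phi y x) /\
    (forall s, is_join phi s -> le x s).

From Stdlib Require Import Reals Lra Lia Wf_nat.
From Stdlib Require Import ProofIrrelevance FunctionalExtensionality PropExtensionality.
From Stdlib Require Import Classical ClassicalEpsilon.
Open Scope R_scope.

(* If ω ∉ Φ, interpolation in a Φ-continuous lattice produces, below any
   x ≫ y, a chain y = s_0 ≪ s_1 ≪ ... ≪ x whose join z is Φ-compact:
   otherwise ⇓z is a member of Φ mapped monotonically and cofinally onto ω by
   w ↦ least n with s_n ≰ w.  So Φ-compact elements approximate everything
   and the lattice is Φ-algebraic.  The interval 𝕀 is always Φ-continuous.
   If ω ∈ Φ, the sets [0, c) are images of ω; they approximate every c > 0,
   so no c > 0 is Φ-compact and {0} is a Φ-join-closed set of compacts missing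
   1.  If ω ∉ Φ, every nonempty member of Φ(𝕀) contains its supremum, so every
   c > 0 is Φ-compact. *)

Lemma chain_le {X : poset} (s : nat -> X) :
  (forall n, le (s n) (s (S n))) -> forall m n, (m <= n)%nat -> le (s m) (s n).
Proof.
intros Hs m n Hmn; induction Hmn as [|n Hmn IH].
- apply le_refl.
- exact (le_trans _ _ _ _ IH (Hs n)).
Qed.

Lemma Phi_sub_poset_ext (Phi : poset -> Prop) (X : poset) (A B : X -> Prop) :
  (forall x, A x <-> B x) -> Phi (sub_poset X A) -> Phi (sub_poset X B).
Proof.
intro AB; replace B with A; [easy|].
apply functional_extensionality; intro x; apply propositional_extensionality, AB.
Qed.

Section JoinDoctrine.

Variable Phi : poset -> Prop.
Hypothesis HPhi : join_doctrine Phi.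

Lemma Phi_one : Phi one_poset.
Proof. exact (proj1 HPhi). Qed.

Lemma Phi_union (P : poset) (S : (P -> Prop) -> Prop) :
  (forall x : P, exists A, S A /\ A x) ->
  (forall A, S A -> Phi (sub_poset P A)) ->
  Phi (incl_poset P S) -> Phi P.
Proof. exact (proj1 (proj2 HPhi) P S). Qed.

Lemma Phi_cofinal_image (P Q : poset) (f : P -> Q) :
  monotone f -> cofinal_image f -> Phi P -> Phi Q.
Proof. exact (proj1 (proj2 (proj2 HPhi)) P Q f). Qed.

Lemma Phi_cofinal_sub (P : poset) (A : P -> Prop) :
  cofinal A -> Phi P -> Phi (sub_poset P A).
Proof. exact (proj2 (proj2 (proj2 HPhi)) P A). Qed.

Lemma Phi_surjective_image (P Q : poset) (f : P -> Q) :
  monotone f -> (forall q, exists p, f p = q) -> Phi P -> Phi Q.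
Proof.
intros Hf Hsurj; apply (Phi_cofinal_image P Q f Hf).
intro q; destruct (Hsurj q) as [p <-]; exists p; apply le_refl.
Qed.

Lemma Phi_sub_poset_nested (X : poset) (B A : X -> Prop) :
  Phi (sub_poset (sub_poset X B) (fun w => A (proj1_sig w))) <->
  Phi (sub_poset X (fun x => B x /\ A x)).
Proof.
split.
- apply (Phi_surjective_image _ (sub_poset X (fun x => B x /\ A x))
    (fun w : sub_poset (sub_poset X B) (fun w => A (proj1_sig w)) =>
    exist (fun x => B x /\ A x) (proj1_sig (proj1_sig w))
          (conj (proj2_sig (proj1_sig w)) (proj2_sig w)))).
  + intros a b h; exact h.
  + intros [x [hB hA]]; exists (exist _ (exist _ x hB) hA).
    apply subset_eq_compat; reflexivity.
- apply (Phi_surjective_image _ (sub_poset (sub_poset X B) (fun w => A (proj1_sig w)))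
    (fun w : sub_poset X (fun x => B x /\ A x) =>
    exist (fun w => A (proj1_sig w))
          (exist B (proj1_sig w) (proj1 (proj2_sig w))) (proj2 (proj2_sig w)))).
  + intros a b h; exact h.
  + intros [[x hB] hA]; exists (exist _ x (conj hB hA)).
    apply subset_eq_compat, subset_eq_compat; reflexivity.
Qed.

Lemma PhiX_principal {X : poset} (x : X) : PhiX Phi X (fun w => le w x).
Proof.
split.
- intros a b hba hax; exact (le_trans _ _ _ _ hba hax).
- apply (Phi_cofinal_image one_poset (sub_poset X (fun w => le w x))
           (fun _ => exist (fun w => le w x) x (le_refl _ x))).
  + intros ? ? _; apply le_refl.
  + intro q; exists tt; exact (proj2_sig q).
  + exact Phi_one.
Qed.

Lemma way_below_le {X : poset} (y x : X) : way_below Phi y x -> le y x.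
Proof.
intro Hyx; apply (Hyx _ (PhiX_principal x)).
intros s [Hs _]; apply Hs, le_refl.
Qed.

Lemma le_way_below_trans {X : poset} (y' y x : X) :
  le y' y -> way_below Phi y x -> way_below Phi y' x.
Proof. intros Hy'y Hyx phi Hphi Hjoin; exact (proj1 Hphi y y' Hy'y (Hyx phi Hphi Hjoin)). Qed.

Lemma way_below_le_trans {X : poset} (y x x' : X) :
  way_below Phi y x -> le x x' -> way_below Phi y x'.
Proof.
intros Hyx Hxx' phi Hphi Hjoin; apply (Hyx phi Hphi).
intros s Hs; exact (le_trans _ _ _ _ Hxx' (Hjoin s Hs)).
Qed.

Lemma Phi_omega_of_decreasing_upsets (P : poset) (L : nat -> P -> Prop) :
  Phi P ->
  (forall m n, (m <= n)%nat -> forall w, L n w -> L m w) ->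
  (forall n w w', le w w' -> L n w -> L n w') ->
  (forall n, exists w, L n w) ->
  (forall w, exists n, ~ L n w) ->
  Phi omega_poset.
Proof.
intros HP Ldecr Lup Lne Lempty.
assert (Hleast : forall w, exists n, ~ L n w /\ forall m, ~ L m w -> (n <= m)%nat).
{ intro w.
  destruct (dec_inh_nat_subset_has_unique_least_element (fun n => ~ L n w))
    as [n [Hn _]]; [intro n; apply classic | apply Lempty |].
  exists n; exact Hn. }
destruct (choice _ Hleast) as [f Hf].
apply (Phi_cofinal_image P omega_poset f); [| | exact HP].
- intros w w' Hww'; apply (proj2 (Hf w)).
  intro Hw; exact (proj1 (Hf w') (Lup _ _ _ Hww' Hw)).
- intro q; destruct (Lne q) as [w Hw]; exists w.
  destruct (Nat.le_gt_cases q (f w)) as [h|h]; [exact h|].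
  exfalso; apply (proj1 (Hf w)), (Ldecr _ q); [lia | exact Hw].
Qed.

Definition Phi_approximated {X : poset} (x : X) : Prop :=
  exists phi, PhiX Phi X phi /\ (forall y, phi y -> way_below Phi y x) /\
              (forall s, is_join phi s -> le x s).

Lemma compact_approximated {X : poset} (x : X) :
  Phi_compact Phi x -> Phi_approximated x.
Proof.
intro Hx; exists (fun w => le w x); split; [apply PhiX_principal | split].
- intros y Hyx; exact (le_way_below_trans _ _ _ Hyx Hx).
- intros s [Hs _]; apply Hs, le_refl.
Qed.

Lemma bottom_approximated {X : poset} (b : X) :
  (forall x, le b x) -> Phi_approximated b.
Proof.
intro Hb.
destruct (classic (Phi (sub_poset X (fun _ => False)))) as [Hempty|Hempty].
- exists (fun _ => False); split; [split; [intros ? ? _ [] | exact Hempty] | split].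
  + intros _ [].
  + intros s _; apply Hb.
- apply compact_approximated; intros phi [Hlow HphiP] _.
  destruct (classic (exists a, phi a)) as [[a ha]|Hno].
  + exact (Hlow a b (Hb a) ha).
  + exfalso; apply Hempty.
    apply (Phi_surjective_image (sub_poset X phi) _
             (fun w => match Hno (ex_intro _ _ (proj2_sig w)) with end)).
    * intros a; destruct (Hno (ex_intro _ _ (proj2_sig a))).
    * intros [_ []].
    * exact HphiP.
Qed.

Section Continuous.

Variable X : poset.
Hypothesis HX : Phi_continuous_lattice Phi X.

(* Any approximant of x coincides with ⇓x. *)
Lemma continuous_way_below (x : X) :
  PhiX Phi X (fun y => way_below Phi y x) /\
  (forall s, is_join (fun y => way_below Phi y x) s -> le x s).
Proof.
destruct (proj2 HX x) as [phi [Hphi [Hsub Hjoin]]].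
replace (fun y => way_below Phi y x) with phi; [split; assumption|].
apply functional_extensionality; intro y; apply propositional_extensionality.
split; [apply Hsub | intro Hy; exact (Hy phi Hphi Hjoin)].
Qed.

Lemma le_of_way_below_ub (x u : X) :
  (forall w, way_below Phi w x -> le w u) -> le x u.
Proof.
intro Hu; destruct (proj1 HX (fun y => way_below Phi y x)) as [s Hs].
exact (le_trans _ _ _ _ (proj2 (continuous_way_below x) s Hs) (proj2 Hs u Hu)).
Qed.

(* ψ = ⋃_{c ≪ x} ⇓c is in Φ(X) by the union axiom and has join above x. *)
Lemma way_below_interpolate (y x : X) :
  way_below Phi y x -> exists c, way_below Phi y c /\ way_below Phi c x.
Proof.
intro Hyx.
set (psi := fun w : X => exists c, way_below Phi c x /\ way_below Phi w c).
set (below := fun c (w : sub_poset X psi) => way_below Phi (proj1_sig w) c).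
set (S := fun A => exists c, way_below Phi c x /\ A = below c).
assert (Hpsi : psi y).
{ apply Hyx; [split|].
  - intros a b hba [c [hcx hac]].
    exists c; split; [exact hcx | exact (le_way_below_trans _ _ _ hba hac)].
  - apply (Phi_union _ S).
    + intros [w [c [hcx hwc]]]; exists (below c).
      split; [exists c; split; [exact hcx | reflexivity] | exact hwc].
    + intros A [c [hcx ->]].
      apply (Phi_sub_poset_nested X psi (fun w => way_below Phi w c)).
      apply (Phi_sub_poset_ext Phi X (fun w => way_below Phi w c)).
      * intro w; split; [intro hwc; split; [exists c; split|]; assumption | tauto].
      * exact (proj2 (proj1 (continuous_way_below c))).
    + apply (Phi_surjective_image (sub_poset X (fun c => way_below Phi c x)) (incl_poset _ S)
               (fun c => exist S (below (proj1_sig c))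
                               (ex_intro _ (proj1_sig c) (conj (proj2_sig c) eq_refl)))).
      * intros c c' hcc' w hw; exact (way_below_le_trans _ _ _ hw hcc').
      * intros [A [c [hcx ->]]]; exists (exist _ c hcx).
        apply subset_eq_compat; reflexivity.
      * exact (proj2 (proj1 (continuous_way_below x))).
  - intros s [Hs _]; apply le_of_way_below_ub; intros c hcx.
    apply le_of_way_below_ub; intros w hwc.
    apply Hs; exists c; split; assumption. }
destruct Hpsi as [c [hcx hyc]]; exists c; split; assumption.
Qed.

Lemma way_below_chain (y x : X) :
  way_below Phi y x ->
  exists s : nat -> X, s O = y /\ (forall n, way_below Phi (s n) (s (S n))) /\
                       (forall n, way_below Phi (s n) x).
Proof.
intro Hyx.
assert (Hstep : forall a : {a : X | way_below Phi a x},
           exists c : {c : X | way_below Phi c x},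
             way_below Phi (proj1_sig a) (proj1_sig c)).
{ intros [a hax]; destruct (way_below_interpolate a x hax) as [c [hac hcx]].
  exists (exist _ c hcx); exact hac. }
destruct (choice _ Hstep) as [g Hg].
exists (fun n => proj1_sig (Nat.iter n g (exist _ y Hyx))).
split; [reflexivity | split].
- intro n; apply Hg.
- intro n; exact (proj2_sig (Nat.iter n g (exist _ y Hyx))).
Qed.

Hypothesis Hom : ~ Phi omega_poset.

Lemma compact_join_way_below_chain (s : nat -> X) (z : X) :
  (forall n, way_below Phi (s n) (s (S n))) ->
  is_join (fun w => exists n, w = s n) z -> Phi_compact Phi z.
Proof.
intros Hs [Hz_ub Hz_lub].
assert (Hsz : forall n, way_below Phi (s n) z).
{ intro n; exact (way_below_le_trans _ _ _ (Hs n) (Hz_ub _ (ex_intro _ (S n) eq_refl))). }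
apply NNPP; intro Hz; apply Hom.
apply (Phi_omega_of_decreasing_upsets (sub_poset X (fun w => way_below Phi w z))
         (fun n w => le (s n) (proj1_sig w))
         (proj2 (proj1 (continuous_way_below z)))).
- intros m n Hmn w Hw.
  exact (le_trans _ _ _ _ (chain_le s (fun k => way_below_le _ _ (Hs k)) m n Hmn) Hw).
- intros n w w' Hww' Hw; exact (le_trans _ _ _ _ Hw Hww').
- intro n; exists (exist _ (s n) (Hsz n)); apply le_refl.
- intros [w Hwz]; apply NNPP; intro Hall; apply Hz.
  apply (le_way_below_trans z w z); [|exact Hwz].
  apply Hz_lub; intros a [n ->].
  apply NNPP; intro h; apply Hall; exists n; exact h.
Qed.

Lemma compact_between (y x : X) :
  way_below Phi y x -> exists k, Phi_compact Phi k /\ le y k /\ way_below Phi k x.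
Proof.
intro Hyx; destruct (way_below_chain y x Hyx) as [s [Hs0 [Hs Hsx]]].
destruct (proj1 HX (fun w => exists n, w = s n)) as [z Hz].
pose proof (compact_join_way_below_chain s z Hs Hz) as Hzc.
exists z; split; [exact Hzc | split].
- rewrite <- Hs0; apply (proj1 Hz); exists O; reflexivity.
- apply (way_below_le_trans z z x Hzc), (proj2 Hz).
  intros a [n ->]; apply way_below_le, Hsx.
Qed.

Lemma continuous_algebraic : Phi_algebraic Phi X.
Proof.
intros x C HCc HCj.
apply (HCj (fun k => way_below Phi k x /\ Phi_compact Phi k)).
- intros k [_ hk]; exact (HCc k hk).
- apply (Phi_sub_poset_nested X _ (Phi_compact Phi)).
  apply Phi_cofinal_sub; [|exact (proj2 (proj1 (continuous_way_below x)))].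
  intros [w hw]; destruct (compact_between w x hw) as [k [hk [hwk hkx]]].
  exists (exist _ k hkx); split; [exact hk | exact hwk].
- split.
  + intros k [hkx _]; exact (way_below_le _ _ hkx).
  + intros u Hu; apply le_of_way_below_ub; intros w hw.
    destruct (compact_between w x hw) as [k [hk [hwk hkx]]].
    exact (le_trans _ _ _ _ hwk (Hu k (conj hkx hk))).
Qed.

End Continuous.

End JoinDoctrine.

Lemma inv_INR_succ_bounds (n : nat) : 0 < / (INR n + 1) <= 1.
Proof.
pose proof (pos_INR n); split; [apply Rinv_0_lt_compat; lra|].
rewrite <- Rinv_1; apply Rinv_le_contravar; lra.
Qed.

Lemma inv_INR_succ_antitone (m n : nat) :
  (m <= n)%nat -> / (INR n + 1) <= / (INR m + 1).
Proof.
intro Hmn; pose proof (pos_INR m); apply le_INR in Hmn.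
apply Rinv_le_contravar; lra.
Qed.

Lemma inv_INR_succ_lt (eps : R) : 0 < eps -> exists n, / (INR n + 1) < eps.
Proof.
intro Heps; destruct (archimed_cor1 eps Heps) as [n [Hn Hn0]]; exists n.
apply lt_0_INR in Hn0.
apply Rle_lt_trans with (/ INR n); [apply Rinv_le_contravar; lra | exact Hn].
Qed.

Definition uval (a : unit_interval) : R := proj1_sig a.

Lemma uval_bounds (a : unit_interval) : 0 <= uval a <= 1.
Proof. exact (proj2_sig a). Qed.

Lemma le_unit_interval (a b : unit_interval) : le a b <-> uval a <= uval b.
Proof. reflexivity. Qed.

Definition ui_zero : unit_interval := exist _ 0 (conj (Rle_refl 0) Rle_0_1).

Lemma ui_zero_le (a : unit_interval) : le ui_zero a.
Proof. exact (proj1 (uval_bounds a)). Qed.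

Lemma unit_interval_complete : complete_lattice unit_interval.
Proof.
intro A; destruct (classic (exists a, A a)) as [[a0 ha0]|Hno].
- destruct (completeness (fun r => exists a, A a /\ uval a = r)) as [s [Hub Hlub]].
  + exists 1; intros r [a [_ <-]]; apply uval_bounds.
  + exists (uval a0), a0; split; [exact ha0 | reflexivity].
  + assert (Hs : 0 <= s <= 1).
    { split.
      - apply Rle_trans with (uval a0); [apply uval_bounds|].
        apply Hub; exists a0; split; [exact ha0 | reflexivity].
      - apply Hlub; intros r [a [_ <-]]; apply uval_bounds. }
    exists (exist _ s Hs); split.
    * intros a ha; exact (Hub _ (ex_intro _ a (conj ha eq_refl))).
    * intros u Hu; apply Hlub; intros r [a [ha <-]]; exact (Hu a ha).
- exists ui_zero; split.
  + intros a ha; destruct (Hno (ex_intro _ a ha)).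
  + intros u _; apply ui_zero_le.
Qed.

Lemma unit_interval_join_le (A : unit_interval -> Prop) (s : unit_interval) (t : R) :
  is_join A s -> (exists a, A a) -> (forall a, A a -> uval a <= t) -> uval s <= t.
Proof.
intros [_ Hlub] [a0 ha0] Ht.
destruct (Rle_lt_dec 1 t) as [h|h]; [pose proof (uval_bounds s); lra|].
assert (Ht01 : 0 <= t <= 1) by (pose proof (Ht a0 ha0); pose proof (uval_bounds a0); lra).
exact (Hlub (exist _ t Ht01) Ht).
Qed.

Lemma le_join_lower_lt (x s : unit_interval) :
  is_join (fun y => uval y < uval x) s -> le x s.
Proof.
intros [Hub _]; apply le_unit_interval.
destruct (Rle_lt_dec (uval x) (uval s)) as [h|h]; [exact h | exfalso].
pose proof (uval_bounds s); pose proof (uval_bounds x).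
assert (Hm : 0 <= (uval s + uval x) / 2 <= 1) by lra.
assert (Hms : (uval s + uval x) / 2 <= uval s).
{ apply (Hub (exist _ _ Hm)); change ((uval s + uval x) / 2 < uval x); lra. }
lra.
Qed.

Lemma unit_interval_lt_way_below (Phi : poset -> Prop) (y x : unit_interval) :
  uval y < uval x -> way_below Phi y x.
Proof.
intros Hyx phi [Hlow _] Hjoin; destruct (unit_interval_complete phi) as [s Hs].
apply NNPP; intro Hy.
assert (Hsy : le s y).
{ apply (proj2 Hs); intros a ha; apply le_unit_interval.
  destruct (Rle_lt_dec (uval a) (uval y)) as [h|h]; [exact h | exfalso].
  apply Hy, (Hlow a y); [apply le_unit_interval; lra | exact ha]. }
assert (Hxs := Hjoin s Hs).
rewrite le_unit_interval in Hxs, Hsy; lra.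
Qed.

Section UnitInterval.

Variable Phi : poset -> Prop.
Hypothesis HPhi : join_doctrine Phi.

Lemma lower_lt_PhiX (x : unit_interval) :
  Phi omega_poset -> 0 < uval x -> PhiX Phi unit_interval (fun y => uval y < uval x).
Proof.
intros Hom Hx; split.
- intros a b hba ha; rewrite le_unit_interval in hba; lra.
- pose proof (uval_bounds x); set (c := uval x) in *.
  assert (Hseq : forall n, 0 <= c - c * / (INR n + 1) <= 1 /\ c - c * / (INR n + 1) < c).
  { intro n; pose proof (inv_INR_succ_bounds n).
    assert (0 < c * / (INR n + 1) <= c); [|lra].
    split; [apply Rmult_lt_0_compat; lra|].
    rewrite <- (Rmult_1_r c) at 2; apply Rmult_le_compat_l; lra. }
  apply (Phi_cofinal_image Phi HPhi omega_poset (sub_poset unit_interval (fun y => uval y < c))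
           (fun n => exist (fun y => uval y < c) (exist _ _ (proj1 (Hseq n))) (proj2 (Hseq n)))).
  + intros m n Hmn; change (c - c * / (INR m + 1) <= c - c * / (INR n + 1)).
    pose proof (inv_INR_succ_antitone m n Hmn).
    assert (c * / (INR n + 1) <= c * / (INR m + 1)) by (apply Rmult_le_compat_l; lra).
    lra.
  + intros [q hq]; change (uval q < c) in hq.
    destruct (inv_INR_succ_lt ((c - uval q) / c)) as [n Hn].
    { apply Rdiv_lt_0_compat; lra. }
    exists n; change (uval q <= c - c * / (INR n + 1)).
    assert (c * / (INR n + 1) < c * ((c - uval q) / c)) by (apply Rmult_lt_compat_l; lra).
    replace (c * ((c - uval q) / c)) with (c - uval q) in * by (field; lra).
    lra.
  + exact Hom.
Qed.

Lemma unit_interval_join_mem (A : unit_interval -> Prop) (s : unit_interval) :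
  ~ Phi omega_poset -> Phi (sub_poset unit_interval A) -> (exists a, A a) ->
  is_join A s -> A s.
Proof.
intros Hom HA Hne Hs; apply NNPP; intro Hns; apply Hom.
assert (Hlt : forall a, A a -> uval a < uval s).
{ intros a ha; destruct (Rle_lt_or_eq_dec _ _ (proj1 Hs a ha)) as [h|h]; [exact h|].
  exfalso; apply Hns.
  rewrite <- (le_antisym _ a s (proj1 Hs a ha) (Req_le _ _ (eq_sym h))); exact ha. }
apply (Phi_omega_of_decreasing_upsets Phi HPhi (sub_poset unit_interval A)
         (fun n w => uval s - / (INR n + 1) <= uval (proj1_sig w)) HA).
- intros m n Hmn w Hw; pose proof (inv_INR_succ_antitone m n Hmn); lra.
- intros n w w' Hww' Hw; change (uval (proj1_sig w) <= uval (proj1_sig w')) in Hww'; lra.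
- intro n; apply NNPP; intro Hno.
  assert (uval s <= uval s - / (INR n + 1)).
  { apply (unit_interval_join_le A s _ Hs Hne); intros a ha.
    apply NNPP; intro h; apply Hno; exists (exist _ a ha); simpl; lra. }
  pose proof (inv_INR_succ_bounds n); lra.
- intros [w hw]; pose proof (Hlt w hw).
  destruct (inv_INR_succ_lt (uval s - uval w)) as [n Hn]; [lra|].
  exists n; simpl; lra.
Qed.

Lemma unit_interval_compact (x : unit_interval) :
  ~ Phi omega_poset -> 0 < uval x -> Phi_compact Phi x.
Proof.
intros Hom Hx phi [Hlow HphiP] Hjoin; destruct (unit_interval_complete phi) as [s Hs].
destruct (classic (exists a, phi a)) as [Hne|Hno].
- exact (Hlow s x (Hjoin s Hs) (unit_interval_join_mem phi s Hom HphiP Hne Hs)).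
- exfalso.
  assert (Hs0 : le s ui_zero).
  { apply (proj2 Hs); intros a ha; destruct (Hno (ex_intro _ a ha)). }
  assert (Hxs := Hjoin s Hs).
  rewrite le_unit_interval in Hxs, Hs0; change (uval ui_zero) with 0 in Hs0; lra.
Qed.

Lemma unit_interval_continuous : Phi_continuous_lattice Phi unit_interval.
Proof.
split; [exact unit_interval_complete | intro x].
destruct (Rle_lt_dec (uval x) 0) as [Hx0|Hx0].
- replace x with ui_zero by (apply le_antisym; [apply ui_zero_le | exact Hx0]).
  exact (bottom_approximated Phi HPhi ui_zero ui_zero_le).
- destruct (classic (Phi omega_poset)) as [Hom|Hom].
  + exists (fun y => uval y < uval x); split; [exact (lower_lt_PhiX x Hom Hx0) | split].
    * intros y Hyx; exact (unit_interval_lt_way_below Phi y x Hyx).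
    * intros s Hs; exact (le_join_lower_lt x s Hs).
  + exact (compact_approximated Phi HPhi x (unit_interval_compact x Hom Hx0)).
Qed.

Lemma unit_interval_compact_eq0 (x : unit_interval) :
  Phi omega_poset -> Phi_compact Phi x -> uval x = 0.
Proof.
intros Hom Hx; destruct (Rle_lt_dec (uval x) 0) as [h|h]; [pose proof (uval_bounds x); lra|].
exfalso; apply (Rlt_irrefl (uval x)).
apply (Hx _ (lower_lt_PhiX x Hom h)); intros s Hs; exact (le_join_lower_lt x s Hs).
Qed.

Lemma unit_interval_not_algebraic :
  Phi omega_poset -> ~ Phi_algebraic Phi unit_interval.
Proof.
intros Hom Halg.
apply R1_neq_R0.
apply (Halg (exist _ 1 (conj Rle_0_1 (Rle_refl 1))) (fun a => uval a = 0)).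
- intros c Hc; exact (unit_interval_compact_eq0 c Hom Hc).
- intros A HA _ s [_ Hlub]; apply Rle_antisym; [|apply uval_bounds].
  apply (Hlub ui_zero); intros a ha; apply le_unit_interval; rewrite (HA a ha); apply Rle_refl.
Qed.

End UnitInterval.

Theorem corollary2p13 (Phi : poset -> Prop) (HPhi : join_doctrine Phi) :
  (~ Phi omega_poset <-> Phi_algebraic Phi unit_interval) /\
  (Phi_algebraic Phi unit_interval <->
     forall X : poset, Phi_continuous_lattice Phi X -> Phi_algebraic Phi X).
Proof.
assert (i_iii : ~ Phi omega_poset ->
          forall X, Phi_continuous_lattice Phi X -> Phi_algebraic Phi X)
  by (intros Hom X HX; exact (continuous_algebraic Phi HPhi X HX Hom)).
assert (iii_ii : (forall X, Phi_continuous_lattice Phi X -> Phi_algebraic Phi X) ->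
          Phi_algebraic Phi unit_interval)
  by (intro H; exact (H _ (unit_interval_continuous Phi HPhi))).
assert (ii_i : Phi_algebraic Phi unit_interval -> ~ Phi omega_poset)
  by (intros Halg Hom; exact (unit_interval_not_algebraic Phi HPhi Hom Halg)).
split; split; auto.
Qed.
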